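(* Let $F$ and $B$ be finite simplicial sets, let $G$ be a simplicial group acting simplicially on $F$ from the left, and let $\tau\colon B_q\to G_{q-1}$ ($q>0$) be a twisting function, so that $E(\tau)=F\times_\tau B$ is a twisted Cartesian product. Let $R\to A$ be a map of commutative rings. Equip the simplicial commutative $R$-algebra $\mathcal{L}^R_F(A)$ with the left action of $G$ by $R$-algebra isomorphisms given in degree $n$ by $g\cdot\bigl(\bigotimes_{f\in F_n}a_f\bigr)=\bigotimes_{f\in F_n}a_{g^{-1}f}$ for $g\in G_n$. Then there is an isomorphism of simplicial commutative $R$-algebras \[\mathcal{L}^R_{E(\tau)}(A)\cong \mathcal{L}^R_B\bigl(\mathcal{L}^R_F(A)^\tau\bigr),\] induced in each simplicial degree $n$ by the identification $\bigotimes_{(f,b)\in F_n\times B_n}A\cong\bigotimes_{b\in B_n}\bigotimes_{f\in F_n}A$.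
   Context: All tensor products are over $R$. For a finite simplicial set $X$ and a commutative $R$-algebra $A$, the (unpointed) Loday construction $\mathcal{L}^R_X(A)$ is the simplicial commutative $R$-algebra with $n$-simplices $\bigotimes_{x\in X_n}A$; the face map $d_i$ sends $\bigotimes_x a_x$ to $\bigotimes_{y\in X_{n-1}}\prod_{x: d_ix=y}a_x$ and the degeneracy $s_i$ sends it to $\bigotimes_{z\in X_{n+1}}\prod_{x:s_ix=z}a_x$ (empty products are $1$). A twisting function (Moore/May) for a simplicial group $G$ and simplicial set $B$ is a family of functions $\tau\colon B_q\to G_{q-1}$, $q>0$, with $d_0\tau(b)=[\tau(d_0b)]^{-1}\tau(d_1b)$ for $q>1$; $\tau(d_{i+1}b)=d_i\tau(b)$ for $i\ge1$, $q>1$; $\tau(s_{i+1}b)=s_i\tau(b)$ for $i\ge 0$; and $\tau(s_0b)=e$. If $G$ acts simplicially on $F$ from the left, the twisted Cartesian product $E(\tau)=F\times_\tau B$ is the simplicial set with $E(\tau)_n=F_n\times B_n$, $d_0(f,b)=(\tau(b)\cdot d_0f,d_0b)$, $d_i(f,b)=(d_if,d_ib)$ for $i>0$, $s_i(f,b)=(s_if,s_ib)$. If $C$ is a simplicial commutative $R$-algebra on which $G$ acts simplicially with each $G_q$ acting on $C_q$ by $R$-algebra isomorphisms, the twisted Loday construction $\mathcal{L}^R_B(C^\tau)$ is the simplicial commutative $R$-algebra with $n$-simplices $\bigotimes_{b\in B_n}C_n$ and structure maps on monomials: $d_0(\bigotimes_b f_b)=\bigotimes_{c\in B_{n-1}}\prod_{b:d_0b=c}\tau(b)(d_0f_b)$;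 $d_i(\bigotimes_b f_b)=\bigotimes_{c\in B_{n-1}}\prod_{b:d_ib=c}d_if_b$ for $1\le i\le n$; $s_i(\bigotimes_b f_b)=\bigotimes_{e\in B_{n+1}}\prod_{b:s_ib=e}s_if_b$. *)

From HB Require Import structures.
From mathcomp Require Import all_boot all_order all_algebra.
Unset Printing Implicit Defensive.
Import GRing.Theory.
Local Open Scope ring_scope.

(* fc n i : X (n+1) -> X n  (d_i, 0 <= i <= n+1) and degeneracies       *)
(* dg n i : X n -> X (n+1)  (s_i, 0 <= i <= n).  Indices out of range   *)
(* are never used.                                                     *)
Definition simplicial_ids {X : nat -> Type}
  (fc : forall n, nat -> X n.+1 -> X n) (dg : forall n, nat -> X n -> X n.+1) : Prop :=
  [/\ (forall n i j (x : X n.+2), (i < j <= n.+2)%N ->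
          fc n i (fc n.+1 j x) = fc n j.-1 (fc n.+1 i x)),
      (forall n i j (x : X n.+1), (i < j <= n.+1)%N ->
          fc n.+1 i (dg n.+1 j x) = dg n j.-1 (fc n i x)),
      (forall n j (x : X n), (j <= n)%N ->
          fc n j (dg n j x) = x /\ fc n j.+1 (dg n j x) = x),
      (forall n i j (x : X n.+1), (j.+1 < i <= n.+2)%N ->
          fc n.+1 i (dg n.+1 j x) = dg n j (fc n i.-1 x)) &
      (forall n i j (x : X n), (i <= j <= n)%N ->
          dg n.+1 i (dg n j x) = dg n.+1 j.+1 (dg n i x))].

Record sSet := SSet {
  sob : nat -> finType;
  sfc : forall n, nat -> sob n.+1 -> sob n;
  sdg : forall n, nat -> sob n -> sob n.+1;
  s_ids : simplicial_ids sfc sdg }.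
Arguments sob : clear implicits.
Arguments sfc : clear implicits.
Arguments sdg : clear implicits.

(* finite simplicial set: finitely many non-degenerate simplices
   (levelwise finite, and every simplex above some dimension is degenerate) *)
Definition finite_sSet (X : sSet) : Prop :=
  exists N : nat, forall n (x : sob X n.+1), (N <= n)%N ->
    exists i (y : sob X n), (i <= n)%N /\ x = sdg X n i y.

Record sGroup := SGroup {
  gob : nat -> Type;
  gmul : forall n, gob n -> gob n -> gob n;
  gone : forall n, gob n;
  ginv : forall n, gob n -> gob n;
  gmulA : forall n x y z, gmul n (gmul n x y) z = gmul n x (gmul n y z);
  gmul1 : forall n x, gmul n (gone n) x = x;
  gmulV : forall n x, gmul n (ginv n x) x = gone n;
  gfc : forall n, nat -> gob n.+1 -> gob n;
  gdg : forall n, nat -> gob n -> gob n.+1;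
  g_ids : simplicial_ids gfc gdg;
  gfc_mul : forall n i x y, gfc n i (gmul n.+1 x y) = gmul n (gfc n i x) (gfc n i y);
  gdg_mul : forall n i x y, gdg n i (gmul n x y) = gmul n.+1 (gdg n i x) (gdg n i y) }.
Arguments gob : clear implicits.
Arguments gmul : clear implicits.
Arguments gone : clear implicits.
Arguments ginv : clear implicits.
Arguments gfc : clear implicits.
Arguments gdg : clear implicits.

Definition sAction (G : sGroup) (F : sSet)
  (act : forall n, gob G n -> sob F n -> sob F n) : Prop :=
  [/\ (forall n x, act n (gone G n) x = x),
      (forall n g h x, act n (gmul G n g h) x = act n g (act n h x)),
      (forall n i g x, (i <= n.+1)%N ->
          sfc F n i (act n.+1 g x) = act n (gfc G n i g) (sfc F n i x)) &
      (forall n i g x, (i <= n)%N ->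
          sdg F n i (act n g x) = act n.+1 (gdg G n i g) (sdg F n i x))].

(* Twisting function tau : B_(q+1) -> G_q  (Moore/May). *)
Definition twisting (G : sGroup) (B : sSet) (tau : forall q, sob B q.+1 -> gob G q) : Prop :=
  [/\ (forall q (b : sob B q.+2),
          gfc G q 0 (tau q.+1 b)
          = gmul G q (ginv G q (tau q (sfc B q.+1 0 b))) (tau q (sfc B q.+1 1 b))),
      (forall q i (b : sob B q.+2), (1 <= i <= q.+1)%N ->
          tau q (sfc B q.+1 i.+1 b) = gfc G q i (tau q.+1 b)),
      (forall q i (b : sob B q.+1), (i <= q)%N ->
          tau q.+1 (sdg B q.+1 i.+1 b) = gdg G q i (tau q b)) &
      (forall q (b : sob B q), tau q (sdg B q 0 b) = gone G q)].

Section TCP.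
Variables (G : sGroup) (F B : sSet) (act : forall n, gob G n -> sob F n -> sob F n)
  (tau : forall q, sob B q.+1 -> gob G q).
Definition tcp_ob (n : nat) : finType := (sob F n * sob B n)%type.
Definition tcp_fc n (i : nat) (p : tcp_ob n.+1) : tcp_ob n :=
  if i == 0%N then (act n (tau n p.2) (sfc F n 0 p.1), sfc B n 0 p.2)
  else (sfc F n i p.1, sfc B n i p.2).
Definition tcp_dg n (i : nat) (p : tcp_ob n) : tcp_ob n.+1 :=
  (sdg F n i p.1, sdg B n i p.2).
End TCP.

Definition alg_hom {R : comPzRingType} {U V : comAlgType R} (f : U -> V) : Prop :=
  [/\ (forall x y, f (x + y) = f x + f y),
      (forall (r : R) x, f (r *: x) = r *: f x),
      f 1 = 1 &
      (forall x y, f (x * y) = f x * f y)].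

(* Tensor powers  tp C X = (x)_{x in X} C  (tensor over R) of commutative
   R-algebras indexed by finite sets, given by the universal property of
   the coproduct of commutative R-algebras:  tp_in x c is the element with
   c in the factor x and 1 elsewhere, and tp_lift f is the algebra map
   (x)_x c_x |-> prod_x f x c_x. *)
Record tensorStr (R : comPzRingType) := TensorStr {
  tp : comAlgType R -> finType -> comAlgType R;
  tp_in : forall (C : comAlgType R) (X : finType), X -> C -> tp C X;
  tp_in_hom : forall (C : comAlgType R) (X : finType) (x : X), alg_hom (tp_in C X x);
  tp_lift : forall (C : comAlgType R) (X : finType) (S : comAlgType R),
      (X -> C -> S) -> tp C X -> S;
  tp_lift_hom : forall (C : comAlgType R) (X : finType) (S : comAlgType R) (f : X -> C -> S),
      (forall x, alg_hom (f x)) -> alg_hom (tp_lift C X S f);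
  tp_lift_in : forall (C : comAlgType R) (X : finType) (S : comAlgType R) (f : X -> C -> S),
      (forall x, alg_hom (f x)) -> forall x c, tp_lift C X S f (tp_in C X x c) = f x c;
  tp_lift_uniq : forall (C : comAlgType R) (X : finType) (S : comAlgType R) (h1 h2 : tp C X -> S),
      alg_hom h1 -> alg_hom h2 ->
      (forall x c, h1 (tp_in C X x c) = h2 (tp_in C X x c)) -> h1 =1 h2 }.
Arguments tp {R} t C X : rename.
Arguments tp_in {R} t C X _ _ : rename.
Arguments tp_lift {R} t {C X S} _ _ : rename.
Arguments tp_in_hom {R} t C X _ : rename.

Section Loday.
Variables (R : comPzRingType) (T : tensorStr R).

(* map induced by a map of finite sets phi : X -> Y:
   (x)_x c_x |-> (x)_y prod_{x : phi x = y} c_x *)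
Definition tmap (C : comAlgType R) {X Y : finType} (phi : X -> Y) :
    tp T C X -> tp T C Y :=
  tp_lift T (fun x c => tp_in T C Y (phi x) c).

Definition loday_ob (A : comAlgType R) (X : nat -> finType) n := tp T A (X n).
Definition loday_fc (A : comAlgType R) (X : nat -> finType)
  (fc : forall n, nat -> X n.+1 -> X n) n i : loday_ob A X n.+1 -> loday_ob A X n :=
  tmap A (fc n i).
Definition loday_dg (A : comAlgType R) (X : nat -> finType)
  (dg : forall n, nat -> X n -> X n.+1) n i : loday_ob A X n -> loday_ob A X n.+1 :=
  tmap A (dg n i).

Variables (G : sGroup) (B : sSet) (tau : forall q, sob B q.+1 -> gob G q)
  (C : nat -> comAlgType R)
  (cfc : forall n, nat -> C n.+1 -> C n) (cdg : forall n, nat -> C n -> C n.+1)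
  (cact : forall n, gob G n -> C n -> C n).

Definition tw_ob n := tp T (C n) (sob B n).
Definition tw_fc n (i : nat) : tw_ob n.+1 -> tw_ob n :=
  tp_lift T (fun (b : sob B n.+1) (c : C n.+1) =>
    tp_in T (C n) (sob B n) (sfc B n i b)
      (if i == 0%N then cact n (tau n b) (cfc n 0 c) else cfc n i c)).
Definition tw_dg n (i : nat) : tw_ob n -> tw_ob n.+1 :=
  tp_lift T (fun (b : sob B n) (c : C n) =>
    tp_in T (C n.+1) (sob B n.+1) (sdg B n i b) (cdg n i c)).
End Loday.
Arguments tmap {R} T C {X Y} phi _.
Arguments loday_ob {R} T A X n.
Arguments loday_fc {R} T A {X} fc n i _.
Arguments loday_dg {R} T A {X} dg n i _.
Arguments tw_ob {R} T B C n.
Arguments tw_fc {R} T {G B} tau {C} cfc cact n i _.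
Arguments tw_dg {R} T {B C} cdg n i _.

(* The simplicial R-algebra L_F(A) with the left G-action
   g . ((x)_f a_f) = (x)_f a_{g^{-1} f}, i.e. the algebra map a at f |-> a at g f. *)
Definition lodayF_act (R : comPzRingType) (T : tensorStr R) (A : comAlgType R)
  (G : sGroup) (F : sSet) (act : forall n, gob G n -> sob F n -> sob F n)
  n (g : gob G n) : loday_ob T A (sob F) n -> loday_ob T A (sob F) n :=
  tmap T A (act n g).
Arguments lodayF_act {R} T A G F act n g _.

(** The tensor power indexed by [F_n * B_n] is the iterated tensor power
    indexed first by [F_n], then by [B_n]: both are coproducts of copies of
    [A] over the same index set, and the comparison map [tp_curry] sends the
    generator [a] at [(f, b)] to [a] at [f], put at [b].  Faces and degeneracies
    on either side are algebra maps, so they are determined by their values on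
    these generators; for a product map [(f, b) |-> (h_b f, k b)] they agree
    generator by generator.  The face [d_0] of [E(tau)] is of this shape with
    [h_b = tau(b) . d_0], which is exactly the twisted face of the twisted Loday
    construction, whose action on [L_F(A)] pushes the factor at [f] to
    [tau(b) f]. *)
From HB Require Import structures.
From mathcomp Require Import all_boot all_order all_algebra.
Import GRing.Theory.
Local Open Scope ring_scope.

Section AlgHom.
Variables (R : comPzRingType) (U V W : comAlgType R).

Lemma alg_hom_id : alg_hom (@id U).
Proof. by split. Qed.

Lemma alg_hom_comp (f : U -> V) (g : V -> W) :
  alg_hom f -> alg_hom g -> alg_hom (g \o f).
Proof.
case=> fD fZ f1 fM [gD gZ g1 gM]; split=> /=.
- by move=> x y; rewrite fD gD.
- by move=> r x; rewrite fZ gZ.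
- by rewrite f1 g1.
- by move=> x y; rewrite fM gM.
Qed.

End AlgHom.
Arguments alg_hom_id {R U}.
Arguments alg_hom_comp {R U V W f g}.

Arguments tp_lift_uniq {R} t {C X S h1 h2}.

Section TensorPower.
Variables (R : comPzRingType) (T : tensorStr R) (C : comAlgType R).

Lemma tmap_alg_hom {X Y : finType} (phi : X -> Y) : alg_hom (tmap T C phi).
Proof. by apply: tp_lift_hom => x; apply: tp_in_hom. Qed.

Lemma tmap_in {X Y : finType} (phi : X -> Y) x c :
  tmap T C phi (tp_in T C X x c) = tp_in T C Y (phi x) c.
Proof. by rewrite /tmap tp_lift_in // => y; apply: tp_in_hom. Qed.

Section Curry.
Context {X Y : finType}.

Definition tp_curry : tp T C (X * Y)%type -> tp T (tp T C X) Y :=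
  tp_lift T (fun p c => tp_in T _ Y p.2 (tp_in T C X p.1 c)).

Definition tp_uncurry_at (y : Y) : tp T C X -> tp T C (X * Y)%type :=
  tp_lift T (fun x c => tp_in T C (X * Y)%type (x, y) c).

Definition tp_uncurry : tp T (tp T C X) Y -> tp T C (X * Y)%type :=
  tp_lift T tp_uncurry_at.

Let tp_curry_summand_hom (xy : X * Y) :
  alg_hom (fun c => tp_in T _ Y xy.2 (tp_in T C X xy.1 c)).
Proof. exact: alg_hom_comp (tp_in_hom T C X xy.1) (tp_in_hom T _ Y xy.2). Qed.

Lemma tp_curry_alg_hom : alg_hom tp_curry.
Proof. exact: tp_lift_hom tp_curry_summand_hom. Qed.

Lemma tp_uncurry_at_alg_hom y : alg_hom (tp_uncurry_at y).
Proof. by apply: tp_lift_hom => x; apply: tp_in_hom. Qed.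

Lemma tp_uncurry_alg_hom : alg_hom tp_uncurry.
Proof. exact: tp_lift_hom tp_uncurry_at_alg_hom. Qed.

Lemma tp_curry_in (xy : X * Y) c :
  tp_curry (tp_in T C (X * Y)%type xy c) = tp_in T _ Y xy.2 (tp_in T C X xy.1 c).
Proof. exact: tp_lift_in tp_curry_summand_hom xy c. Qed.

Lemma tp_uncurry_in1 y c : tp_uncurry (tp_in T _ Y y c) = tp_uncurry_at y c.
Proof. exact: tp_lift_in tp_uncurry_at_alg_hom y c. Qed.

Lemma tp_uncurry_at_in x y c :
  tp_uncurry_at y (tp_in T C X x c) = tp_in T C (X * Y)%type (x, y) c.
Proof. by rewrite /tp_uncurry_at tp_lift_in // => x'; apply: tp_in_hom. Qed.

Lemma tp_uncurry_in x y c :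
  tp_uncurry (tp_in T _ Y y (tp_in T C X x c)) = tp_in T C (X * Y)%type (x, y) c.
Proof. by rewrite tp_uncurry_in1 tp_uncurry_at_in. Qed.

Lemma tp_curryK : cancel tp_curry tp_uncurry.
Proof.
apply: (tp_lift_uniq T
          (alg_hom_comp tp_curry_alg_hom tp_uncurry_alg_hom) alg_hom_id).
by case=> x y c /=; rewrite tp_curry_in tp_uncurry_in.
Qed.

Lemma tp_uncurryK : cancel tp_uncurry tp_curry.
Proof.
apply: (tp_lift_uniq T
          (alg_hom_comp tp_uncurry_alg_hom tp_curry_alg_hom) alg_hom_id) => y c /=.
rewrite tp_uncurry_in1; move: c.
apply: (tp_lift_uniq T (alg_hom_comp (tp_uncurry_at_alg_hom y) tp_curry_alg_hom)
          (tp_in_hom _ _ _ y)).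
by move=> x c /=; rewrite tp_uncurry_at_in tp_curry_in.
Qed.

Lemma tp_curry_bij : bijective tp_curry.
Proof. exact: Bijective tp_curryK tp_uncurryK. Qed.

End Curry.

Lemma tp_curry_natural (X Y X' Y' : finType) (u : (X * Y -> X' * Y')%type)
    (Phi : tp T (tp T C X) Y -> tp T (tp T C X') Y') :
  alg_hom Phi ->
  (forall x y c, Phi (tp_in T _ Y y (tp_in T C X x c))
                 = tp_in T _ Y' (u (x, y)).2 (tp_in T C X' (u (x, y)).1 c)) ->
  forall z, tp_curry (tmap T C u z) = Phi (tp_curry z).
Proof.
move=> Phi_hom Phi_in.
apply: (tp_lift_uniq T (alg_hom_comp (tmap_alg_hom u) tp_curry_alg_hom)
          (alg_hom_comp tp_curry_alg_hom Phi_hom)).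
by case=> x y c /=; rewrite tmap_in !tp_curry_in Phi_in.
Qed.

End TensorPower.
Arguments tp_curry {R} T {C X Y} _.

Section TwistedLoday.
Variables (R : comPzRingType) (T : tensorStr R) (G : sGroup) (B : sSet)
  (tau : forall q, sob B q.+1 -> gob G q) (C : nat -> comAlgType R)
  (cfc : forall n, nat -> C n.+1 -> C n) (cdg : forall n, nat -> C n -> C n.+1)
  (cact : forall n, gob G n -> C n -> C n).
Hypotheses (cfc_hom : forall n i, alg_hom (cfc n i))
  (cdg_hom : forall n i, alg_hom (cdg n i))
  (cact_hom : forall n g, alg_hom (cact n g)).

Let tw_fc_summand_hom n i (b : sob B n.+1) :
  alg_hom (fun c => tp_in T (C n) (sob B n) (sfc B n i b)
                      (if i == 0%N then cact n (tau n b) (cfc n 0 c) else cfc n i c)).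
Proof.
apply: (alg_hom_comp (g := tp_in T _ _ _)); last exact: tp_in_hom.
by case: (i == 0%N) => //; exact: alg_hom_comp.
Qed.

Lemma tw_fc_alg_hom n i : alg_hom (tw_fc T tau cfc cact n i).
Proof. exact: tp_lift_hom (tw_fc_summand_hom n i). Qed.

Lemma tw_fc_in n i b c :
  tw_fc T tau cfc cact n i (tp_in T (C n.+1) (sob B n.+1) b c)
  = tp_in T (C n) (sob B n) (sfc B n i b)
      (if i == 0%N then cact n (tau n b) (cfc n 0 c) else cfc n i c).
Proof. exact: tp_lift_in (tw_fc_summand_hom n i) b c. Qed.

Let tw_dg_summand_hom n i (b : sob B n) :
  alg_hom (fun c => tp_in T (C n.+1) (sob B n.+1) (sdg B n i b) (cdg n i c)).
Proof. exact: alg_hom_comp (cdg_hom n i) (tp_in_hom _ _ _ _). Qed.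

Lemma tw_dg_alg_hom n i : alg_hom (tw_dg T (B := B) cdg n i).
Proof. exact: tp_lift_hom (tw_dg_summand_hom n i). Qed.

Lemma tw_dg_in n i b c :
  tw_dg T (B := B) cdg n i (tp_in T (C n) (sob B n) b c)
  = tp_in T (C n.+1) (sob B n.+1) (sdg B n i b) (cdg n i c).
Proof. exact: tp_lift_in (tw_dg_summand_hom n i) b c. Qed.

End TwistedLoday.

(* The hypotheses on F, B, the action and tau are only needed for both sides
   to be simplicial objects; the comparison is compatible with each face and
   degeneracy map separately. *)
Theorem proposition2p5 (R : comPzRingType) (T : tensorStr R) (A : comAlgType R)
  (F B : sSet) (G : sGroup) (act : forall n, gob G n -> sob F n -> sob F n)
  (tau : forall q, sob B q.+1 -> gob G q) :
  finite_sSet F -> finite_sSet B -> sAction G F act -> twisting G B tau ->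
  let E := tcp_ob F B in
  let LE_fc := loday_fc T A (tcp_fc G F B act tau) in
  let LE_dg := loday_dg T A (tcp_dg F B) in
  let C := loday_ob T A (sob F) in
  let TW_fc := tw_fc T tau (loday_fc T A (sfc F)) (lodayF_act T A G F act) in
  let TW_dg := tw_dg T (B := B) (loday_dg T A (sdg F)) in
  exists phi : forall n, loday_ob T A E n -> tw_ob T B C n,
    [/\ (forall n, alg_hom (phi n) /\ bijective (phi n)),
        (forall n (f : sob F n) (b : sob B n) (a : A),
           phi n (tp_in T A (E n) (f, b) a)
           = tp_in T (C n) (sob B n) b (tp_in T A (sob F n) f a)),
        (forall n i x, (i <= n.+1)%N -> phi n (LE_fc n i x) = TW_fc n i (phi n.+1 x)) &
        (forall n i x, (i <= n)%N -> phi n.+1 (LE_dg n i x) = TW_dg n i (phi n x))].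
Proof.
move=> _ _ _ _; cbv zeta.
have fc_hom n i : alg_hom (loday_fc T A (sfc F) n i) by apply: tmap_alg_hom.
have dg_hom n i : alg_hom (loday_dg T A (sdg F) n i) by apply: tmap_alg_hom.
have act_hom n g : alg_hom (lodayF_act T A G F act n g) by apply: tmap_alg_hom.
exists (fun n => tp_curry T (X := sob F n) (Y := sob B n)); split.
- by move=> n; split; [apply: tp_curry_alg_hom | apply: tp_curry_bij].
- by move=> n f b a; apply: tp_curry_in.
- move=> n i x _; apply: tp_curry_natural; first exact: tw_fc_alg_hom.
  move=> f b a; rewrite tw_fc_in // /tcp_fc /lodayF_act /loday_fc.
  by case: eqP => [->|_]; rewrite /= !tmap_in.
- move=> n i x _; apply: tp_curry_natural; first exact: tw_dg_alg_hom.
  by move=> f b a; rewrite tw_dg_in // /loday_dg !tmap_in.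
Qed.
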